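(* Let $u\le v$ in Bruhat order on $S_m$ and $1\le i\le m$. Then: (1) $w\mapsto\epsilon_i(w)$ is a poset isomorphism from the Bruhat interval $[u,v]$ onto $[\epsilon_i(u),\epsilon_i(v)]$; (2) $[\epsilon_i(u),\epsilon_{i+1}(v)]=[\epsilon_i(u),\epsilon_i(v)]\sqcup[\epsilon_{i+1}(u),\epsilon_{i+1}(v)]$, and for $w,w'\in[u,v]$ and $j,k\in\{i,i+1\}$ we have $\epsilon_j(w)\le\epsilon_k(w')$ if and only if $w\le w'$ and $j\le k$.
   Context: For $w\in S_m$ and $1\le i\le m+1$, $\epsilon_i(w)\in S_{m+1}$ is defined by $\epsilon_i(w)(j)=w(j)+1$ for $j<i$, $\epsilon_i(w)(i)=1$, $\epsilon_i(w)(j)=w(j-1)+1$ for $j>i$. Bruhat intervals $[a,b]=\{w: a\le w\le b\}$ in Bruhat order. *)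

From mathcomp Require Import all_boot all_fingroup.
Set Implicit Arguments. Unset Strict Implicit. Unset Printing Implicit Defensive.
Local Open Scope group_scope.

(* Permutations of {1..m} are modelled as 'S_m (permutations of 'I_m = {0..m-1}). *)

Definition ninv (m : nat) (w : 'S_m) : nat :=
  #|[set p : 'I_m * 'I_m | (p.1 < p.2)%N && (w p.2 < w p.1)%N]|.

Definition bruhat_step (m : nat) : rel 'S_m :=
  fun x y => [exists i : 'I_m, exists j : 'I_m,
                [&& (i < j)%N, y == x * tperm i j & (ninv x < ninv y)%N]].

Definition bruhat_le (m : nat) : rel 'S_m := connect (@bruhat_step m).

Definition bruhat_interval (m : nat) (a b : 'S_m) : {set 'S_m} :=
  [set w | bruhat_le a w && bruhat_le w b].

(* epsilon_i (0-based position i : 'I_m.+1): inserts the value 1 (here 0) at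
   position i and shifts all values of w up by one.  lift_perm i ord0 w maps
   i to ord0 and lift i k to lift ord0 (w k). *)
Definition eps (m : nat) (i : 'I_m.+1) (w : 'S_m) : 'S_m.+1 :=
  lift_perm i ord0 w.

(* 0-based position i (= 1-based i+1) and i+1 in 'I_m.+1, for i : 'I_m. *)
Definition posI (m : nat) (i : 'I_m) : 'I_m.+1 := widen_ord (leqnSn m) i.
Definition posI1 (m : nat) (i : 'I_m) : 'I_m.+1 := lift ord0 i.

(* Write [pos0 z] for the position of the value 0 in [z : 'S_m.+1]; [eps p w] is
   the permutation with its 0 at [p] that restricts to [w] elsewhere, and it has
   [p] more inversions than [w].  A Bruhat step [z -> z * tperm c d] can move the
   0 only to the right, since moving it left removes inversions.  Hence [pos0] is
   monotone, every element of [[eps p u, eps p v]] has its 0 at [p], and the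
   Bruhat steps inside that interval are exactly the [eps p]-images of the steps
   of [[u, v]].  Between adjacent positions [p] and [p + 1] the only step moving
   the 0 across is [eps p w -> eps (p + 1) w], which yields both the disjoint
   decomposition and the comparison rule. *)

From mathcomp Require Import all_boot all_fingroup zify.
Set Implicit Arguments. Unset Strict Implicit. Unset Printing Implicit Defensive.
Local Open Scope group_scope.

Lemma ninvE n (w : 'S_n) :
  ninv w = \sum_(r : 'I_n) \sum_(s : 'I_n) ((r < s) && (w s < w r))%N.
Proof.
rewrite /ninv -sum1dep_card big_mkcond.
pose F (r s : 'I_n) := nat_of_bool ((r < s) && (w s < w r))%N.
exact: esym (pair_big predT predT F).
Qed.

Lemma tperm_adj_ltn n (p q r s : 'I_n) : (q : nat) = p.+1 ->
  ~~ ((r == p) && (s == q)) -> ~~ ((r == q) && (s == p)) ->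
  (tperm p q r < tperm p q s)%N = (r < s)%N.
Proof.
move=> pq.
case: tpermP => [->|->|/eqP + /eqP +]; case: tpermP => [->|->|/eqP + /eqP +];
  rewrite -!(inj_eq val_inj) /=; lia.
Qed.

Lemma sum_delta n (p q : 'I_n) :
  \sum_(r : 'I_n) \sum_(s : 'I_n) ((r == q) && (s == p)) = 1%N.
Proof.
rewrite (bigD1 q) //= [X in _ + X]big1 ?addn0 => [|r /negbTE rq]; last first.
  by rewrite big1 // => s _; rewrite rq.
by rewrite (bigD1 p) //= [X in _ + X]big1 ?eqxx // => s /negbTE ->; rewrite andbF.
Qed.

(* [s * t] applies [s] first, so [tperm p q * w] swaps the entries at positions
   [p] and [q], while [w * tperm a b] swaps the values [a] and [b].  Swapping
   adjacent positions changes only the relative order of that pair. *)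
Lemma ninv_tperm_adj n (w : 'S_n) (p q : 'I_n) :
  (q : nat) = p.+1 -> (w p < w q)%N -> ninv (tperm p q * w) = (ninv w).+1.
Proof.
move=> pq lt_wpq.
rewrite !ninvE -addn1 -(sum_delta p q) -big_split /=.
rewrite (reindex_inj (@perm_inj _ (tperm p q))); apply: eq_bigr => r _.
rewrite (reindex_inj (@perm_inj _ (tperm p q))) -big_split; apply: eq_bigr => s _ /=.
rewrite !permM !tpermK.
have [/andP[/eqP-> /eqP->]|not_qp] := boolP ((r == q) && (s == p)).
  by rewrite tpermL tpermR lt_wpq pq; lia.
have [/andP[/eqP-> /eqP->]|not_pq] := boolP ((r == p) && (s == q)).
  by rewrite tpermL tpermR pq; lia.
by rewrite tperm_adj_ltn // addn0.
Qed.

Lemma ninv_tperm_adj_le n (w : 'S_n) (p q : 'I_n) :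
  (q : nat) = p.+1 -> (ninv w <= (ninv (tperm p q * w)).+1)%N.
Proof.
move=> pq; have [lt_wpq|le_wqp] := ltnP (w p) (w q).
  by rewrite ninv_tperm_adj ?leqW.
have lt_wqp : (w q < w p)%N.
  rewrite ltn_neqAle le_wqp andbT (inj_eq (@ord_inj _)) (inj_eq perm_inj).
  by rewrite -(inj_eq (@ord_inj _)) pq; lia.
by rewrite -{1}(tpermKg p q w) ninv_tperm_adj // !permM tpermL tpermR.
Qed.

Lemma perm_gt0 n (z : 'S_n.+1) (p q : 'I_n.+1) :
  z p = ord0 -> p != q -> (0 < z q)%N.
Proof.
move=> z0 pq; rewrite lt0n; apply: contra pq => /eqP zq0.
by apply/eqP/(@perm_inj _ z)/ord_inj; rewrite z0 zq0.
Qed.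

(* Move the 0 one step right, then conjugate: the last adjacent swap can undo at
   most one inversion. *)
Lemma ninv_tperm0_lt n (z : 'S_n.+1) (p q : 'I_n.+1) :
  (p < q)%N -> z p = ord0 -> (ninv z < ninv (tperm p q * z))%N.
Proof.
move=> /subnKC qE; move: (q - p.+1)%N qE => k; elim: k z p q => [|k IH] z p q qE z0.
  have pq : p != q by rewrite -(inj_eq (@ord_inj _)) -qE; lia.
  by rewrite ninv_tperm_adj ?z0 ?(perm_gt0 z0) ?ltnSn //; lia.
have Hp1 : (p.+1 < n.+1)%N by have := ltn_ord q; lia.
pose p1 : 'I_n.+1 := Ordinal Hp1.
have ninv_z1 : ninv (tperm p p1 * z) = (ninv z).+1.
  rewrite ninv_tperm_adj // z0 (perm_gt0 z0) // -(inj_eq (@ord_inj _)) /=; lia.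
have := IH (tperm p p1 * z) p1 q; rewrite permM tpermR => /(_ _ z0).
set R := tperm p1 q * _ => ltR.
have -> : tperm p q * z = tperm p p1 * R.
  have p1q : p1 != q by rewrite -(inj_eq (@ord_inj _)) /=; lia.
  have pq : p != q by rewrite -(inj_eq (@ord_inj _)) /=; lia.
  by rewrite -(tpermJ_tperm p1q pq) conjgE tpermV /R tpermC !mulgA.
have := @ninv_tperm_adj_le _ R p p1 erefl; have := ltR (etrans (addSnnS _ _) qE).
rewrite ninv_z1; lia.
Qed.

Lemma ninv_mul_tperm0_lt n (z : 'S_n.+1) (d : 'I_n.+1) :
  (z^-1 ord0 < z^-1 d)%N -> (ninv z < ninv (z * tperm ord0 d))%N.
Proof.
move=> lt_zV; rewrite -[in tperm _ _](permKV z ord0) -[in tperm _ _](permKV z d).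
by rewrite -tpermJ conjgE mulKVg ninv_tperm0_lt ?permKV.
Qed.

Definition pos0 n (z : 'S_n.+1) : 'I_n.+1 := z^-1 ord0.

Lemma pos0_mul_tperm n (z : 'S_n.+1) c d :
  pos0 (z * tperm c d) = z^-1 (tperm c d ord0).
Proof. by rewrite /pos0 invMg tpermV permM. Qed.

(* A Bruhat step may move the 0 to the right only: moving it left loses inversions. *)
Lemma bruhat_step_pos0 n (x y : 'S_n.+1) : bruhat_step x y -> (pos0 x <= pos0 y)%N.
Proof.
case/existsP => c /existsP [d /and3P [lt_cd /eqP -> lt_xy]].
rewrite pos0_mul_tperm; case: (tpermP c d ord0) => [c0 | d0 | //]; last first.
  by move: lt_cd; rewrite -d0.
subst c; rewrite leqNgt; apply: contraTN lt_xy => lt_yx.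
have := @ninv_mul_tperm0_lt _ (x * tperm ord0 d) d.
rewrite -mulgA tperm2 mulg1 invMg tpermV !permM tpermL tpermR => /(_ lt_yx).
by rewrite -leqNgt => /ltnW.
Qed.

Lemma bruhat_le_pos0 n (x y : 'S_n.+1) : bruhat_le x y -> (pos0 x <= pos0 y)%N.
Proof.
case/connectP => s; elim: s x => [|z s IH] x /=; first by move=> _ ->.
by case/andP => /bruhat_step_pos0 le_xz /IH le_zy /le_zy; apply: leq_trans.
Qed.

Lemma eps_id m (p : 'I_m.+1) w : eps p w p = ord0.
Proof. exact: lift_perm_id. Qed.

Lemma eps_lift m (p : 'I_m.+1) w k : eps p w (lift p k) = lift ord0 (w k).
Proof. exact: lift_perm_lift. Qed.

Lemma pos0_eps m (p : 'I_m.+1) w : pos0 (eps p w) = p.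
Proof. by rewrite /pos0 /eps lift_permV lift_perm_id. Qed.

Lemma eps_inj m (p : 'I_m.+1) : injective (@eps m p).
Proof.
move=> w w' eq_ww'; apply/permP => k; apply: (@lift_inj _ ord0).
by rewrite -(eps_lift p w) -(eps_lift p w') eq_ww'.
Qed.

Lemma eps_surj m (p : 'I_m.+1) (z : 'S_m.+1) : pos0 z = p -> exists w, z = eps p w.
Proof.
move=> z0; have zp : z p = ord0 by rewrite -z0 permKV.
pose f (k : 'I_m) := odflt k (unlift ord0 (z (lift p k))).
have fE k : lift ord0 (f k) = z (lift p k).
  rewrite /f; case: unliftP => [j -> // | zk0].
  by move: zk0; rewrite -zp => /perm_inj/eqP; rewrite lift_eqF.
have f_inj : injective f.
  by move=> k k' eq_f; apply/(@lift_inj _ p)/(@perm_inj _ z); rewrite -!fE eq_f.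
exists (perm f_inj); apply/permP => x.
by case: (unliftP p x) => [k ->|->]; rewrite ?eps_id // eps_lift permE fE.
Qed.

Lemma lift_perm0_tperm n (a b : 'I_n) :
  lift_perm ord0 ord0 (tperm a b) = tperm (lift ord0 a) (lift ord0 b).
Proof.
apply/permP => k; case: (unliftP ord0 k) => [j|] ->.
  by rewrite lift_perm_lift inj_tperm //; apply: lift_inj.
by rewrite lift_perm_id tpermD // eq_sym neq_lift.
Qed.

Lemma eps_mul_tperm m (p : 'I_m.+1) x a b :
  eps p (x * tperm a b) = eps p x * tperm (lift ord0 a) (lift ord0 b).
Proof. by rewrite /eps -lift_perm0_tperm lift_permM. Qed.

Lemma lift_ltn n (p : 'I_n.+1) (i j : 'I_n) : (lift p i < lift p j)%N = (i < j)%N.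
Proof. by rewrite /= /bump; case: (leqP p i); case: (leqP p j); lia. Qed.

Lemma lift_ltn_id n (p : 'I_n.+1) (i : 'I_n) : (lift p i < p)%N = (i < p)%N.
Proof. by rewrite /= /bump; case: (leqP p i); lia. Qed.

(* The inserted 0 is inverted exactly with the [p] entries to its left. *)
Lemma ninv_eps m (p : 'I_m.+1) w : ninv (eps p w) = (ninv w + p)%N.
Proof.
rewrite !ninvE (bigD1_ord p) //= big1 ?add0n => [|s _]; last first.
  by rewrite eps_id ltn0 andbF.
rewrite (eq_bigr (fun i : 'I_m => (i < p) + \sum_(s < m) ((i < s) && (w s < w i))))%N.
  rewrite big_split /= addnC -big_mkcond.
  rewrite -(big_ord_widen _ (fun=> 1%N) (ltn_ord p : p <= m)%N).
  by rewrite big_const_ord iter_addn_0 mul1n.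
move=> i _; rewrite (bigD1_ord p) //= eps_id eps_lift lift_ltn_id lift0 andbT.
by congr (_ + _); apply: eq_bigr => j _; rewrite !eps_lift lift_ltn lift0 ltnS.
Qed.

Lemma bruhat_step_eps m (p : 'I_m.+1) x y :
  bruhat_step x y -> bruhat_step (eps p x) (eps p y).
Proof.
case/existsP => a /existsP [b /and3P [lt_ab /eqP -> lt_xy]].
apply/existsP; exists (lift ord0 a); apply/existsP; exists (lift ord0 b).
by rewrite eps_mul_tperm eqxx lift_ltn lt_ab -eps_mul_tperm !ninv_eps ltn_add2r.
Qed.

Lemma eps_bruhat_homo m (p : 'I_m.+1) x y :
  bruhat_le x y -> bruhat_le (eps p x) (eps p y).
Proof.
case/connectP => s; elim: s x => [|z s IH] x /=; first by move=> _ ->; apply: connect0.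
by case/andP => /(bruhat_step_eps p)/connect1 le_xz /IH le_zy /le_zy; apply: connect_trans.
Qed.

(* A Bruhat step out of [eps p x] that keeps the 0 in place swaps two nonzero values. *)
Lemma bruhat_step_epsl m (p : 'I_m.+1) x z :
  bruhat_step (eps p x) z -> pos0 z = p -> exists2 y, z = eps p y & bruhat_step x y.
Proof.
case/existsP => c /existsP [d /and3P [lt_cd /eqP z_def lt_xz]] z0.
case: (unliftP ord0 d) => [b d_def | d0]; last by move: lt_cd; rewrite d0.
case: (unliftP ord0 c) => [a c_def | c0].
  rewrite c_def d_def -eps_mul_tperm in z_def lt_xz; rewrite c_def d_def lift_ltn in lt_cd.
  exists (x * tperm a b) => //; apply/existsP; exists a; apply/existsP; exists b.
  by rewrite eqxx lt_cd /=; rewrite z_def !ninv_eps ltn_add2r in lt_xz.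
move: z0; rewrite z_def pos0_mul_tperm -c0 tpermL => epsVd.
have /perm_inj dc : (eps p x)^-1 d = (eps p x)^-1 ord0.
  by rewrite epsVd -[RHS]/(pos0 _) pos0_eps.
by move: lt_cd; rewrite dc -c0 ltnn.
Qed.

Lemma bruhat_le_pos0_between m (p q : 'I_m.+1) x y z :
  bruhat_le (eps p x) z -> bruhat_le z (eps q y) -> (p <= pos0 z <= q)%N.
Proof.
move=> /bruhat_le_pos0 + /bruhat_le_pos0; rewrite !pos0_eps => le_pz le_zq.
by rewrite le_pz le_zq.
Qed.

Lemma bruhat_le_pos0_eq m (p : 'I_m.+1) x y z :
  bruhat_le (eps p x) z -> bruhat_le z (eps p y) -> pos0 z = p.
Proof.
move=> le_xz le_zy; apply/ord_inj/eqP.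
by rewrite eqn_leq andbC (bruhat_le_pos0_between le_xz le_zy).
Qed.

Lemma eps_bruhat_mono m (p : 'I_m.+1) x y :
  bruhat_le (eps p x) (eps p y) = bruhat_le x y.
Proof.
apply/idP/idP; last exact: eps_bruhat_homo.
case/connectP => s; elim: s x => [|z s IH] x /=.
  by move=> _ /eps_inj ->; apply: connect0.
case/andP => step_xz path_zy last_zy.
have le_zy : bruhat_le z (eps p y) by apply/connectP; exists s.
have [y' z_def le_xy'] :=
  bruhat_step_epsl step_xz (bruhat_le_pos0_eq (connect1 step_xz) le_zy).
rewrite z_def in path_zy last_zy.
exact: connect_trans (connect1 le_xy') (IH _ path_zy last_zy).
Qed.

Section AdjacentPositions.

Variables (m : nat) (p q : 'I_m.+1).
Hypothesis pq : (q : nat) = p.+1.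

Lemma lift_perm_adj : lift_perm q p 1 = tperm p q.
Proof.
apply/permP => k; apply/ord_inj; case: (unliftP q k) => [j ->|->]; last first.
  by rewrite lift_perm_id tpermR.
rewrite lift_perm_lift perm1 /=.
by case: tpermP => [/(congr1 (@nat_of_ord _))|/(congr1 (@nat_of_ord _))|/eqP + /eqP +];
  rewrite -?(inj_eq (@ord_inj _)) /= /bump; lia.
Qed.

Lemma eps_adj w : eps q w = eps p w * tperm ord0 (eps p w q).
Proof.
rewrite -[in tperm _ _](eps_id p w) -tpermJ conjgE mulKVg.
by rewrite /eps -lift_perm_adj lift_permM mul1g.
Qed.

Lemma bruhat_step_eps_adj w : bruhat_step (eps p w) (eps q w).
Proof.
apply/existsP; exists ord0; apply/existsP; exists (eps p w q).
have pq' : p != q by rewrite -(inj_eq (@ord_inj _)) pq; lia.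
rewrite -eps_adj eqxx !ninv_eps pq addnS ltnSn andbT /=.
by rewrite (perm_gt0 (eps_id p w) pq').
Qed.

Lemma bruhat_le_eps_adj w : bruhat_le (eps p w) (eps q w).
Proof. exact/connect1/bruhat_step_eps_adj. Qed.

(* The only Bruhat step moving the 0 from [p] to [q] swaps it with the entry at [q]. *)
Lemma bruhat_step_eps_adj_eq x z :
  bruhat_step (eps p x) z -> pos0 z = q -> z = eps q x.
Proof.
case/existsP => c /existsP [d /and3P [lt_cd /eqP -> _]].
rewrite pos0_mul_tperm eps_adj; case: (tpermP c d ord0) => [c0 | d0 | _ _] z0.
- by rewrite -c0 -z0 permKV.
- by move: lt_cd; rewrite -d0.
- by move: z0 pq; rewrite -[_ ord0]/(pos0 _) pos0_eps => ->; lia.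
Qed.

Lemma pos0_adj_cases (z : 'S_m.+1) :
  (p <= pos0 z <= q)%N -> pos0 z = p \/ pos0 z = q.
Proof.
rewrite pq => le_pzq; have [zp|zp] := eqVneq (pos0 z) p; first by left.
by right; apply/ord_inj; move: zp le_pzq; rewrite -(inj_eq (@ord_inj _)) pq; lia.
Qed.

Lemma eps_bruhat_adj x y : bruhat_le (eps p x) (eps q y) = bruhat_le x y.
Proof.
apply/idP/idP => [|le_xy]; last first.
  exact: connect_trans (eps_bruhat_homo p le_xy) (bruhat_le_eps_adj y).
case/connectP => s; elim: s x => [|z s IH] x /=.
  by move=> _ /(congr1 (@pos0 _)); rewrite !pos0_eps => qp; move: pq; rewrite qp; lia.
case/andP => step_xz path_zy last_zy.
have le_zy : bruhat_le z (eps q y) by apply/connectP; exists s.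
have [/(bruhat_step_epsl step_xz) [x' z_def le_xx'] | zq] :=
  pos0_adj_cases (bruhat_le_pos0_between (connect1 step_xz) le_zy).
  rewrite z_def in path_zy last_zy.
  exact: connect_trans (connect1 le_xx') (IH _ path_zy last_zy).
by move: le_zy; rewrite (bruhat_step_eps_adj_eq step_xz zq) eps_bruhat_mono.
Qed.

Lemma eps_bruhat_adj_rev x y : bruhat_le (eps q x) (eps p y) = false.
Proof. by apply/negP => /bruhat_le_pos0; rewrite !pos0_eps pq ltnn. Qed.

Lemma bruhat_interval_eps_adj u v :
  bruhat_interval (eps p u) (eps q v)
  = bruhat_interval (eps p u) (eps p v) :|: bruhat_interval (eps q u) (eps q v).
Proof.
apply/setP => z; rewrite !inE; apply/andP/orP => [[le_uz le_zv] | ].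
  have [] := pos0_adj_cases (bruhat_le_pos0_between le_uz le_zv);
    move=> /eps_surj [w z_def]; move: le_uz le_zv; rewrite z_def.
    by rewrite eps_bruhat_adj !eps_bruhat_mono => -> ->; left.
  by rewrite eps_bruhat_adj !eps_bruhat_mono => -> ->; right.
case=> /andP [le_uz le_zv]; split => //.
  exact: connect_trans le_zv (bruhat_le_eps_adj v).
exact: connect_trans (bruhat_le_eps_adj u) le_uz.
Qed.

End AdjacentPositions.

Lemma imset_eps_bruhat_interval m (p : 'I_m.+1) u v :
  [set eps p w | w in bruhat_interval u v] = bruhat_interval (eps p u) (eps p v).
Proof.
apply/setP => z; apply/imsetP/idP => [[w w_in ->] | z_in].
  by move: w_in; rewrite !inE !eps_bruhat_mono.
move: (z_in); rewrite inE => /andP [le_uz le_zv].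
have [w z_def] := eps_surj (bruhat_le_pos0_eq le_uz le_zv).
by exists w => //; move: z_in; rewrite z_def !inE !eps_bruhat_mono.
Qed.

Lemma disjoint_bruhat_interval_eps m (p q : 'I_m.+1) u v u' v' :
  p != q ->
  [disjoint bruhat_interval (eps p u) (eps p v) & bruhat_interval (eps q u') (eps q v')].
Proof.
move=> pq; apply/pred0P => z /=; rewrite !inE; apply/negP.
case/andP => /andP [le_uz le_zv] /andP [le_uz' le_zv'].
move: pq; rewrite -(bruhat_le_pos0_eq le_uz le_zv).
by rewrite (bruhat_le_pos0_eq le_uz' le_zv') eqxx.
Qed.

Unset Implicit Arguments.

Theorem mainTheorem13 (m : nat) (u v : 'S_m) (i : 'I_m) :
  bruhat_le u v ->
  ([set eps (posI i) w | w in bruhat_interval u v]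
     = bruhat_interval (eps (posI i) u) (eps (posI i) v)
   /\ {in bruhat_interval u v &, injective (eps (posI i))}
   /\ {in bruhat_interval u v &, forall w w',
         bruhat_le (eps (posI i) w) (eps (posI i) w') = bruhat_le w w'})
  /\
  (bruhat_interval (eps (posI i) u) (eps (posI1 i) v)
     = bruhat_interval (eps (posI i) u) (eps (posI i) v)
       :|: bruhat_interval (eps (posI1 i) u) (eps (posI1 i) v)
   /\ [disjoint bruhat_interval (eps (posI i) u) (eps (posI i) v)
        & bruhat_interval (eps (posI1 i) u) (eps (posI1 i) v)]
   /\ {in bruhat_interval u v &, forall w w',
         forall j k : 'I_m.+1,
           j \in [:: posI i; posI1 i] -> k \in [:: posI i; posI1 i] ->
           bruhat_le (eps j w) (eps k w') = bruhat_le w w' && (j <= k)%N}).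
Proof.
move=> _; have adj : (posI1 i : nat) = (posI i).+1 by [].
have posI_neq : posI i != posI1 i by rewrite -(inj_eq (@ord_inj _)) adj neq_ltn ltnSn.
split.
  split; first exact: imset_eps_bruhat_interval.
  by split=> w w' _ _; [apply: eps_inj | apply: eps_bruhat_mono].
split; first exact: bruhat_interval_eps_adj.
split; first exact: disjoint_bruhat_interval_eps.
move=> w w' _ _ j k; rewrite !inE => /orP [] /eqP -> /orP [] /eqP ->.
- by rewrite eps_bruhat_mono leqnn andbT.
- by rewrite eps_bruhat_adj // adj leqnSn andbT.
- by rewrite eps_bruhat_adj_rev // adj ltnn andbF.
- by rewrite eps_bruhat_mono leqnn andbT.
Qed.
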